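(* For every $n\in\mathbb{N}$ and $t\in\mathbb{C}$, \[ t^n=\sum_{k=0}^nS_D[n,k]\,(t)^{D}_{k,q}+n(t-1)^{n-1}-[n]_q\,q^{n-1}(t)^{D}_{n-1,q}. \]
   Context: $[k]_q=1+\dots+q^{k-1}$, $[0]_q=0$. For fixed $n$, the $q$-falling factorial of type D is $(t)^D_{0,q}=1$, $(t)^D_{k,q}=(t-[1]_q)(t-[3]_q)\cdots(t-[2k-1]_q)$ for $1\le k<n$, and $(t)^D_{n,q}=(t-[1]_q)(t-[3]_q)\cdots(t-[2n-3]_q)(t-[n-1]_q)$. For $S\subset\mathbb{Z}\setminus\{0\}$, $\overline{S}=\{-i:i\in S\}$, a standard signed partition (SSP) of $S$ with $k$ blocks is a sequence $(S_1,\dots,S_k)$ of disjoint nonempty subsets of $S\cup\overline{S}$ with $\{S_1,\dots,S_k,\overline{S_1},\dots,\overline{S_k}\}$ a partition of $S\cup\overline{S}$ and $\min|S_1|\le\dots\le\min|S_k|$ ($|S_i|=\{|j|:j\in S_i\}$). A PSSP of $S$ is an SSP of a (possibly empty) subset of $S$. $B(S,k)$, $B_{\subseteq}(S,k)$ are the sets of SSPs, PSSPs of $S$ with $k$ blocks, and $D_{\subseteq}([n],k)=B_{\subseteq}([n],k)\setminus\bigcup_{i=1}^nB([n]\setminus\{i\},k)$. For $\pi=(S_1,\dots,S_k)$, $\mathrm{pos}(\pi)=\#\{x\in\bigcup_iS_i:x>0\}$, $m(\pi)=2\sum_{i=1}^ki\cdot\#S_i-\mathrm{pos}(\pi)$,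 and $S_D[n,k]=\frac{1}{q^{k^2}[2]_q^k}\sum_{\pi\in D_{\subseteq}([n],k)}q^{m(\pi)}$. For $n=0$ the terms $n(t-1)^{n-1}$ and $[n]_qq^{n-1}(t)^D_{n-1,q}$ are $0$. *)

From mathcomp Require Import all_boot all_order all_algebra.
Set Implicit Arguments.
Unset Strict Implicit.
Unset Printing Implicit Defensive.
Import GRing.Theory.

(* Signed elements of [n]: (j, b) with j : 'I_n encodes the integer
   (j+1) if b = true and -(j+1) if b = false. *)
Definition sgnel (n : nat) : finType := ('I_n * bool)%type.

Section TypeD.
Variable n : nat.

Definition sbar (A : {set sgnel n}) : {set sgnel n} :=
  [set x : sgnel n | (x.1, ~~ x.2) \in A].

(* min |A| (as a natural number j+1); n.+1 for the empty set (never used). *)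
Definition minabs (A : {set sgnel n}) : nat :=
  \big[minn/n.+1]_(x in A) (x.1).+1.

(* (S_1,...,S_k) (with S_{i+1} = P i) is a standard signed partition of T *)
Definition is_SSP (k : nat) (T : {set 'I_n}) (P : {ffun 'I_k -> {set sgnel n}}) : bool :=
  [&& [forall i, P i != set0],
      [forall i, forall j, (i != j) ==> [disjoint P i & P j]],
      [forall i, forall j, [disjoint P i & sbar (P j)]],
      (\bigcup_i (P i :|: sbar (P i))) == [set x : sgnel n | x.1 \in T] &
      [forall i : 'I_k, forall j : 'I_k, (i <= j)%N ==> (minabs (P i) <= minabs (P j))%N]].

Definition is_PSSP (k : nat) (P : {ffun 'I_k -> {set sgnel n}}) : bool :=
  [exists T : {set 'I_n}, is_SSP T P].

Definition is_Dsub (k : nat) (P : {ffun 'I_k -> {set sgnel n}}) : bool :=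
  is_PSSP P && ~~ [exists i : 'I_n, is_SSP (setT :\ i) P].

Definition pos (k : nat) (P : {ffun 'I_k -> {set sgnel n}}) : nat :=
  #|[set x in \bigcup_i P i | x.2]|.

(* m(pi) = 2 sum_{i=1}^k i #S_i - pos(pi)  (always >= 0) *)
Definition mstat (k : nat) (P : {ffun 'I_k -> {set sgnel n}}) : nat :=
  (2 * \sum_(i < k) (i.+1 * #|P i|) - pos P)%N.

End TypeD.

Section QStuff.
Variable R : fieldType.
Local Open Scope ring_scope.

Definition qint (q : R) (k : nat) : R := \sum_(i < k) q ^+ i.

Definition SD (n k : nat) (q : R) : R :=
  (q ^+ (k * k) * qint q 2 ^+ k)^-1 *
  \sum_(P : {ffun 'I_k -> {set sgnel n}} | is_Dsub P) q ^+ mstat P.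

(* (t)^D_{k,q} for fixed n (only meaningful for k <= n) *)
Definition fallD (n k : nat) (q t : R) : R :=
  if k == 0%N then 1
  else if (k < n)%N then \prod_(i < k) (t - qint q (2 * i).+1)
  else (\prod_(i < n.-1) (t - qint q (2 * i).+1)) * (t - qint q n.-1).

End QStuff.

(* A PSSP of [n] is determined by the word whose j-th letter says whether j+1
   is absent or, if present, in which block and with which sign it occurs.
   Standardness says that the blocks are opened in the order S_1, ..., S_k, and
   m(pi) is a sum over letters, a letter in block b (counted from 0) contributing
   2b+1, plus 1 if its sign is negative.  Weight a word with k blocks by
   q^m / (q^(k^2) [2]^k) times (t)_k = (t-[1])(t-[3])...(t-[2k-1]).  Appending a
   letter to a word with k blocks multiplies the total weight by t: an absent
   letter contributes 1, the letters of the old blocks b < k contribute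
   sum_b q^(2b+1) [2] = [2k+1] - 1, and opening block k+1 contributes exactly
   (t - [2k+1]) because the normalisation absorbs its weight.  Hence all words of
   length n sum to t^n, while those with no, resp. exactly one, absent letter sum
   to (t-1)^n, resp. n (t-1)^(n-1).  Discarding the latter gives
   sum_k S_D[n,k] (t)_k = t^n - n (t-1)^(n-1); finally S_D[n,n] = 1 and
   (t)^D_{n,q} - (t)_n = [n]_q q^(n-1) (t)_(n-1). *)

From mathcomp Require Import all_boot all_order all_algebra.
From mathcomp Require Import zify ring.
Import Order.TTheory GRing.Theory.

Set Implicit Arguments.
Unset Strict Implicit.
Unset Printing Implicit Defensive.

(* The letter of j+1 in the word of a PSSP P is [None] if j+1 is not in the
   support of P, and [Some (b, sg)] if the signed element [(j, sg)] lies in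
   the block S_(b+1). *)
Definition letter := option (nat * bool).

Definition in_block (i : nat) (y : letter) : bool :=
  if y is Some (b, _) then b == i else false.
Definition block_lt (k : nat) (y : letter) : bool :=
  if y is Some (b, _) then b < k else true.
Definition first_occ (s : seq letter) (i : nat) : nat := find (in_block i) s.

(* Restricted growth words: the standard ordering of the blocks of a PSSP. *)
Definition rgword (k : nat) (s : seq letter) : Prop :=
  [/\ all (block_lt k) s,
      forall i, i < k -> first_occ s i < size s &
      forall i, i.+1 < k -> first_occ s i < first_occ s i.+1].

Definition nblocks_step (c : option nat) (y : letter) : option nat :=
  if y is Some (b, _) then
    obind (fun m => if b < m then Some m else if b == m then Some m.+1 else None) c
  else c.
Definition nblocks (s : seq letter) : option nat := foldl nblocks_step (Some 0) s.

Lemma nblocks_rcons s y : nblocks (rcons s y) = nblocks_step (nblocks s) y.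
Proof. by rewrite /nblocks foldl_rcons. Qed.

Lemma first_occ_rcons s y i : first_occ (rcons s y) i =
  if has (in_block i) s then first_occ s i else (size s + ~~ in_block i y).
Proof.
rewrite /first_occ -cats1 find_cat; case: ifP => // _ /=.
by case: (in_block i y); rewrite ?addn0 ?addn1.
Qed.

Lemma first_occ_ltn k s : (forall i, i.+1 < k -> first_occ s i < first_occ s i.+1) ->
  forall i j, i < j < k -> first_occ s i < first_occ s j.
Proof.
move=> occS i j /andP[]; elim: j => // j IH.
rewrite ltnS leq_eqVlt => /orP [/eqP <- | lt_ij] lt_jk; first exact: occS.
exact: ltn_trans (IH lt_ij (ltnW lt_jk)) (occS _ lt_jk).
Qed.

Lemma rgword_nil k : rgword k [::] <-> k = 0.
Proof.
split=> [|->]; last by split.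
case: k => // k [_ occ _]; by have := occ 0 (ltn0Sn k).
Qed.

Lemma has_first_occ s i : has (in_block i) s = (first_occ s i < size s).
Proof. exact: has_find. Qed.

Lemma rgword_rcons_None k s : rgword k (rcons s None) <-> rgword k s.
Proof.
have occ_rcons i : first_occ (rcons s None) i =
    if has (in_block i) s then first_occ s i else (size s).+1.
  by rewrite first_occ_rcons addn1.
split=> -[]; rewrite ?all_rcons ?size_rcons => bnd occ occS.
  have has_s i : i < k -> has (in_block i) s.
    by move=> /occ; rewrite occ_rcons; case: ifP; rewrite ?ltnn.
  split=> // [i /has_s | i lt_ik]; first by rewrite has_first_occ.
  by have := occS i lt_ik; rewrite !occ_rcons !has_s // ltnW.
have has_s i : i < k -> has (in_block i) s by rewrite has_first_occ; apply: occ.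
split=> [|i lt_ik|i lt_ik]; first by rewrite all_rcons bnd.
  by rewrite occ_rcons has_s // size_rcons ltnS ltnW ?occ.
by rewrite !occ_rcons !has_s ?(ltnW lt_ik) // occS.
Qed.

Lemma has_block_lt k s : all (block_lt k) s -> has (in_block k) s = false.
Proof.
move/allP=> bnd; apply/hasP=> -[[[b sg]|] /bnd] //= lt_bk /eqP eq_bk.
by rewrite eq_bk ltnn in lt_bk.
Qed.

Section RgwordRconsSome.
Variables (k b : nat) (sg : bool) (s : seq letter).

Let occ_rcons i : first_occ (rcons s (Some (b, sg))) i =
  if has (in_block i) s then first_occ s i else size s + (b != i).
Proof. by rewrite first_occ_rcons. Qed.

Lemma rgword_rcons_old : has (in_block b) s ->
  rgword k (rcons s (Some (b, sg))) <-> b < k /\ rgword k s.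
Proof.
move=> has_b; split=> [[]|[lt_bk [bnd occ occS]]].
  rewrite all_rcons size_rcons /= => /andP[lt_bk bnd] occ occS.
  have has_s i : i < k -> has (in_block i) s.
    move=> /occ; rewrite occ_rcons; case: ifP => // hasNi.
    case: eqP => [eq_bi | _]; last by rewrite addn1 ltnn.
    by rewrite -eq_bi has_b in hasNi.
  split=> //; split=> // [i /has_s | i lt_ik]; first by rewrite has_first_occ.
  by have := occS i lt_ik; rewrite !occ_rcons !has_s // ltnW.
have has_s i : i < k -> has (in_block i) s by rewrite has_first_occ; apply: occ.
split=> [|i lt_ik|i lt_ik]; first by rewrite all_rcons /= lt_bk bnd.
  by rewrite occ_rcons has_s // size_rcons ltnS ltnW ?occ.
by rewrite !occ_rcons !has_s ?(ltnW lt_ik) // occS.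
Qed.

Lemma rgword_rcons_new : ~~ has (in_block b) s ->
  rgword k (rcons s (Some (b, sg))) <-> b.+1 = k /\ rgword b s.
Proof.
move=> /negbTE hasNb; split=> [[]|[<- [bnd occ occS]]].
  rewrite all_rcons size_rcons /= => /andP[lt_bk bnd] occ occS.
  have has_s i : i < k -> i != b -> has (in_block i) s.
    move=> lt_ik neq_ib; have := occ i lt_ik.
    by rewrite occ_rcons (eq_sym b) neq_ib addn1; case: ifP => // _; rewrite ltnn.
  have occ_b : first_occ (rcons s (Some (b, sg))) b = size s.
    by rewrite occ_rcons hasNb eqxx addn0.
  have eq_bk : b.+1 = k.
    apply/eqP; rewrite eqn_leq lt_bk leqNgt; apply/negP=> lt_b1k.
    have := occS b lt_b1k; rewrite occ_b occ_rcons has_s // ?gtn_eqF //.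
    by rewrite ltnNge ltnW // -has_first_occ has_s // gtn_eqF.
  have lt_b i : i < b -> i < k by rewrite -eq_bk => /ltnW.
  split=> //; split=> [|i lt_ib|i lt_ib].
  - apply/allP=> -[[c sc]|] //= /[dup] y_in /(allP bnd) /=.
    rewrite -eq_bk ltnS leq_eqVlt => /orP[/eqP eq_cb|//].
    by move/negbT/hasPn: hasNb => /(_ _ y_in) /=; rewrite eq_cb eqxx.
  - by rewrite -has_first_occ has_s ?ltn_eqF ?lt_b.
  - have := occS i (lt_b _ lt_ib).
    by rewrite !occ_rcons !has_s ?ltn_eqF ?lt_b // ltnW.
have has_s i : i < b -> has (in_block i) s by rewrite has_first_occ; apply: occ.
split=> [|i|i]; rewrite ?ltnS.
- by rewrite all_rcons /= ltnSn; apply: sub_all bnd => -[[c sc]|] //= /ltnW.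
- rewrite leq_eqVlt size_rcons => /orP[/eqP -> | lt_ib].
    by rewrite occ_rcons hasNb eqxx addn0.
  by rewrite occ_rcons has_s // ltnS ltnW ?occ.
- rewrite leq_eqVlt => /orP[/eqP eq_ib | lt_ib].
    have lt_ib : i < b by rewrite -eq_ib.
    by rewrite !occ_rcons eq_ib hasNb has_s // eqxx addn0 occ.
  by rewrite !occ_rcons !has_s ?(ltnW lt_ib) // occS.
Qed.

End RgwordRconsSome.

Lemma rgword_rcons_Some k b sg s : rgword k (rcons s (Some (b, sg))) <->
  (b < k /\ rgword k s) \/ (b.+1 = k /\ rgword b s).
Proof.
have [has_b | hasNb] := boolP (has (in_block b) s).
  rewrite rgword_rcons_old //; split=> [|[//|[_ [bnd _ _]]]]; first by left.
  by rewrite has_block_lt in has_b.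
rewrite rgword_rcons_new //; split=> [|[[lt_bk [_ occ _]]|//]]; first by right.
by rewrite has_first_occ occ in hasNb.
Qed.

Lemma nblocksP s k : nblocks s = Some k <-> rgword k s.
Proof.
elim/last_ind: s k => [|s y IH] k; first by rewrite rgword_nil; split=> [[]|->].
rewrite nblocks_rcons; case: y => [[b sg]|]; last by rewrite rgword_rcons_None -IH.
rewrite rgword_rcons_Some -!IH /=; case: (nblocks s) => [m|] /=; last first.
  by split=> // -[[_ ]|[_ ]].
case: ltngtP => [lt_bm | lt_mb | <-]; split=> //.
- by case=> <-; left.
- by case=> [[_ [->]] | [_ [eq_mb]]]; rewrite // eq_mb ltnn in lt_bm.
- case=> [[lt_bk [eq_mk]] | [_ [eq_mb]]]; last by rewrite eq_mb ltnn in lt_mb.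
  by have := ltn_trans lt_mb lt_bk; rewrite eq_mk ltnn.
- by case=> <-; right.
- by case=> [[lt_bk [eq_bk]] | [<- _]] //; rewrite eq_bk ltnn in lt_bk.
Qed.

Lemma nblocks_count_le s k : nblocks s = Some k -> k + count_mem None s <= size s.
Proof.
elim/last_ind: s k => [|s y IH] k; first by case=> <-.
rewrite nblocks_rcons -cats1 count_cat size_cat addn1 /=.
case: (nblocks s) IH => [m /(_ m erefl) le_ms|]; last by case: y => [[]|].
case: y => [[b sg]|] /=; last by case=> <-; rewrite addnA addn1 ltnS.
rewrite !addn0; case: ifP => _; first by case=> <-; apply: leqW.
by case: eqP => // _ [<-]; rewrite addSn ltnS.
Qed.

Definition letters (N : nat) : seq letter :=
  None :: [seq Some (b, sg) | b <- iota 0 N, sg <- [:: true; false]].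

Fixpoint words (N m : nat) : seq (seq letter) :=
  if m is m'.+1 then [seq rcons s y | s <- words N m', y <- letters N] else [:: [::]].

Lemma mem_letters N y : (y \in letters N) = block_lt N y.
Proof.
case: y => [[b sg]|] //; rewrite in_cons orFb.
apply/allpairsP/idP => [[[c sc] [/= + _ [-> _]]] | /= lt_bN]; first by rewrite mem_iota.
by exists (b, sg); rewrite /= mem_iota lt_bN !inE; case: sg.
Qed.

Lemma uniq_letters N : uniq (letters N).
Proof.
rewrite cons_uniq; apply/andP; split; first by apply/allpairsP=> -[[? ?] []].
by apply: allpairs_uniq => [|//|[? ?] [? ?] _ _ [-> ->]] //; apply: iota_uniq.
Qed.

Lemma mem_words N m s : (s \in words N m) = (size s == m) && all (block_lt N) s.
Proof.
elim: m s => [|m IH] s; first by rewrite inE; case: s.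
apply/allpairsP/idP => [[[s' y] /= [+ + ->]] | ].
  by rewrite IH size_rcons all_rcons mem_letters eqSS => /andP[-> ->] ->.
case/lastP: s => // s y; rewrite size_rcons all_rcons eqSS => /and3P[size_s bnd_y bnd_s].
by exists (s, y); rewrite IH mem_letters size_s bnd_y bnd_s.
Qed.

Lemma uniq_words N m : uniq (words N m).
Proof.
elim: m => // m IH; apply: allpairs_uniq => //; first exact: uniq_letters.
by move=> [s y] [s' y'] _ _ /= /eqP; rewrite eqseq_rcons => /andP[/eqP -> /eqP ->].
Qed.

Definition letter_exp (y : letter) : nat :=
  if y is Some (b, sg) then (2 * b).+1 + ~~ sg else 0.
Definition block_height (y : letter) : nat := if y is Some (b, _) then b.+1 else 0.
Definition positive (y : letter) : bool := if y is Some (_, sg) then sg else false.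

Definition word_exp (s : seq letter) : nat := \sum_(y <- s) letter_exp y.

Lemma word_exp_rcons s y : word_exp (rcons s y) = word_exp s + letter_exp y.
Proof. by rewrite /word_exp -cats1 big_cat big_seq1. Qed.

Lemma count_None_rcons (s : seq letter) y :
  count_mem None (rcons s y) = count_mem None s + (y == None).
Proof. by rewrite -cats1 count_cat /= addn0. Qed.

Lemma minabs_eq n (A : {set sgnel n}) x0 :
  x0 \in A -> (forall x, x \in A -> x0.1 <= x.1) -> minabs A = (x0.1).+1.
Proof.
move=> x0A min_x0; apply/eqP; rewrite eqn_leq /minabs -minEnat -!leEnat.
rewrite bigmin_le_cond //=; apply/bigmin_geP; split=> [|x /min_x0].
  by rewrite leEnat ltnS ltnW.
by rewrite leEnat ltnS.
Qed.

Section Encoding.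
Variables n k : nat.
Local Notation blocks := {ffun 'I_k -> {set sgnel n}}.

Definition word_ffun (s : seq letter) : blocks :=
  [ffun i => [set x : sgnel n | nth None s x.1 == Some (val i, x.2)]].

Definition ffun_letter (P : blocks) (j : 'I_n) : letter :=
  if [pick ib : 'I_k * bool | (j, ib.2) \in P ib.1] is Some (i, b)
  then Some (val i, b) else None.

Definition ffun_word (P : blocks) : seq letter := [seq ffun_letter P j | j <- enum 'I_n].

Definition support (s : seq letter) : {set 'I_n} := [set j : 'I_n | nth None s j != None].

Lemma in_word_ffun s i (x : sgnel n) :
  (x \in word_ffun s i) = (nth None s x.1 == Some (val i, x.2)).
Proof. by rewrite ffunE inE. Qed.

Lemma size_ffun_word P : size (ffun_word P) = n.
Proof. by rewrite size_map size_enum_ord. Qed.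

Lemma nth_ffun_word P (j : 'I_n) : nth None (ffun_word P) j = ffun_letter P j.
Proof. by rewrite (nth_map j) ?size_enum_ord // nth_ord_enum. Qed.

Lemma ffun_word_block_lt P : all (block_lt k) (ffun_word P).
Proof.
apply/allP=> y /mapP[j _ ->]; rewrite /ffun_letter.
by case: pickP => // -[i b] _; apply: ltn_ord.
Qed.

Section WordFfun.
Variable s : seq letter.
Hypotheses (size_s : size s = n) (bnd_s : all (block_lt k) s).
Local Notation P := (word_ffun s).

Lemma block_lt_nth (j : 'I_n) : block_lt k (nth None s j).
Proof. by apply: (allP bnd_s); rewrite mem_nth ?size_s. Qed.

Lemma word_ffunK : ffun_word P = s.
Proof.
apply: (@eq_from_nth _ None); rewrite size_ffun_word ?size_s // => j lt_jn.
have -> : j = Ordinal lt_jn by [].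
rewrite nth_ffun_word /ffun_letter; case: pickP => [[i b] /= | noblock].
  by rewrite in_word_ffun => /eqP ->.
have := block_lt_nth (Ordinal lt_jn).
case nth_j: (nth None s _) => [[c b]|] //= lt_ck.
by have := noblock (Ordinal lt_ck, b); rewrite /= in_word_ffun nth_j eqxx.
Qed.

Lemma nth_first_occ i : first_occ s i < size s ->
  exists sg, nth None s (first_occ s i) = Some (i, sg).
Proof.
rewrite -has_first_occ => /(nth_find None).
by case: (nth None s _) => [[c sg] /= /eqP ->|//]; exists sg.
Qed.

Lemma first_occ_le i j sg : nth None s j = Some (i, sg) -> first_occ s i <= j.
Proof.
by move=> nth_j; rewrite leqNgt; apply/negP=> /(before_find None); rewrite nth_j /= eqxx.
Qed.

Lemma first_occ_mem (i : 'I_k) : first_occ s i < size s ->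
  exists2 x : sgnel n, x \in P i & x.1 = first_occ s i :> nat.
Proof.
move=> lt_is; have [sg nth_i] := nth_first_occ lt_is.
have lt_in : first_occ s i < n by rewrite -size_s.
by exists (Ordinal lt_in, sg); rewrite // in_word_ffun nth_i.
Qed.

Lemma word_ffun_neq0 (i : 'I_k) : (P i != set0) = (first_occ s i < size s).
Proof.
apply/set0Pn/idP=> [[x] | /first_occ_mem[x x_in _]]; last by exists x.
rewrite in_word_ffun => /eqP/first_occ_le le_ix.
by rewrite (leq_ltn_trans le_ix) ?size_s.
Qed.

Lemma minabs_word_ffun (i : 'I_k) :
  first_occ s i < size s -> minabs (P i) = (first_occ s i).+1.
Proof.
case/first_occ_mem=> x x_in eq_x; rewrite -eq_x; apply: minabs_eq => // y.
by rewrite in_word_ffun eq_x => /eqP/first_occ_le.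
Qed.

Lemma cover_word_ffun (x : sgnel n) :
  (x \in \bigcup_i (P i :|: sbar (P i))) = (nth None s x.1 != None).
Proof.
case: x => j b /=; apply/bigcupP/idP => [[i _]|].
  by rewrite !inE /= !in_word_ffun => /orP[] /eqP ->.
have := block_lt_nth j; case nth_j: (nth None s j) => [[c sg]|] //= lt_ck _.
exists (Ordinal lt_ck) => //; rewrite !inE /= !in_word_ffun /= nth_j.
by case: b sg {nth_j} => -[]; rewrite eqxx ?orbT.
Qed.

Lemma SSP_word_ffun T : is_SSP T P <-> T = support s /\ rgword k s.
Proof.
split.
  case/and5P=> /forallP neq0 _ _ /eqP cover_T /forallP mono.
  have occ i : i < k -> first_occ s i < size s.
    by move=> lt_ik; rewrite -(word_ffun_neq0 (Ordinal lt_ik)) neq0.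
  split.
    apply/setP=> j; move/setP: cover_T => /(_ (j, true)).
    by rewrite cover_word_ffun !inE.
  split=> // i lt_i1k; have lt_ik := ltnW lt_i1k.
  have := forallP (mono (Ordinal lt_ik)) (Ordinal lt_i1k); rewrite /= leqnSn.
  rewrite !minabs_word_ffun ?occ // ltnS leq_eqVlt => /orP[/eqP eq_occ | //].
  have [sg nth_i] := nth_first_occ (occ _ lt_ik).
  have [sg' nth_i1] := nth_first_occ (occ _ lt_i1k).
  by move: nth_i1; rewrite -eq_occ nth_i => -[/n_Sn].
case=> -> [_ occ occS]; apply/and5P; split.
- by apply/forallP=> i; rewrite word_ffun_neq0 occ.
- apply/forallP=> i; apply/forallP=> j; apply/implyP=> neq_ij.
  rewrite -setI_eq0; apply/eqP/setP=> x; rewrite !inE !in_word_ffun.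
  apply/negP=> /andP[/eqP -> /eqP[/val_inj eq_ij]].
  by rewrite eq_ij eqxx in neq_ij.
- apply/forallP=> i; apply/forallP=> j.
  rewrite -setI_eq0; apply/eqP/setP=> x; rewrite !inE !in_word_ffun.
  by apply/negP=> /andP[/eqP -> /eqP[_]]; case: (x.2).
- by apply/eqP/setP=> x; rewrite cover_word_ffun !inE.
- apply/forallP=> i; apply/forallP=> j; apply/implyP.
  rewrite leq_eqVlt => /orP[/eqP/val_inj -> // | lt_ij].
  rewrite !minabs_word_ffun ?occ // ltnS ltnW //.
  by apply: (first_occ_ltn occS); rewrite lt_ij ltn_ord.
Qed.

Lemma PSSP_word_ffun : is_PSSP P <-> rgword k s.
Proof.
split=> [/existsP[T /SSP_word_ffun[]] // | rg_s].
by apply/existsP; exists (support s); apply/SSP_word_ffun.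
Qed.

Lemma count_None_support : count_mem None s = #|~: support s|.
Proof.
rewrite -sum1_count (big_nth None) size_s big_mkord -sum1_card.
by apply: eq_bigl => j; rewrite !inE negbK.
Qed.

Lemma Dsub_word_ffun : is_Dsub P <-> rgword k s /\ count_mem None s != 1.
Proof.
rewrite /is_Dsub.
have -> : [exists i, is_SSP (setT :\ i) P] = is_PSSP P && (count_mem None s == 1).
  rewrite count_None_support; apply/existsP/andP=> [[i /SSP_word_ffun[supp_s rg_s]]|].
    split; first exact/PSSP_word_ffun.
    by rewrite -supp_s setCD setCT set0U cards1.
  case=> /PSSP_word_ffun rg_s /cards1P[i supp_i]; exists i; apply/SSP_word_ffun.
  by rewrite setTD -supp_i setCK.
case: (boolP (is_PSSP P)) => /= [/PSSP_word_ffun rg_s|].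
  by split=> [|[]].
by move=> /negP notPSSP; split=> // -[/PSSP_word_ffun].
Qed.

Lemma sum_sgnel_nth (F : letter -> bool -> nat) :
  \sum_(x : sgnel n) F (nth None s x.1) x.2 = \sum_(y <- s) (F y true + F y false).
Proof.
rewrite (big_nth None) size_s big_mkord.
rewrite -(pair_bigA _ (fun (j : 'I_n) b => F (nth None s j) b)).
by apply: eq_bigr => j _; rewrite big_bool.
Qed.

Lemma weighted_card_word_ffun :
  \sum_(i < k) i.+1 * #|P i| = \sum_(y <- s) block_height y.
Proof.
pose F (y : letter) b := if y is Some (c, b') then (b' == b) * c.+1 else 0.
have sum_blocks (x : sgnel n) :
    \sum_(i < k) i.+1 * (x \in P i) = F (nth None s x.1) x.2.
  have := block_lt_nth x.1; case nth_x: (nth None s x.1) => [[c b]|] /= => [lt_ck|_].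
    rewrite (bigD1 (Ordinal lt_ck)) //= big1 => [|i].
      by rewrite in_word_ffun nth_x (inj_eq Some_inj) xpair_eqE eqxx addn0 mulnC.
    rewrite -val_eqE in_word_ffun nth_x (inj_eq Some_inj) xpair_eqE /=.
    by rewrite eq_sym => /negbTE ->; rewrite muln0.
  by apply: big1 => i _; rewrite in_word_ffun nth_x muln0.
rewrite (eq_bigr (fun i : 'I_k => \sum_(x : sgnel n) i.+1 * (x \in P i))); last first.
  by move=> i _; rewrite -sum1_card big_mkcond big_distrr.
rewrite exchange_big /= (eq_bigr _ (fun x _ => sum_blocks x)) sum_sgnel_nth.
by apply: eq_bigr => -[[c []]|] _ /=; rewrite ?mul1n ?mul0n ?addn0.
Qed.


Lemma in_bigcup_word_ffun (x : sgnel n) : (x \in \bigcup_i P i) =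
  (if nth None s x.1 is Some (_, b) then b == x.2 else false).
Proof.
apply/bigcupP/idP=> [[i _]|]; first by rewrite in_word_ffun => /eqP ->.
have := block_lt_nth x.1; case nth_x: (nth None s x.1) => [[c b]|] //= lt_ck /eqP eq_b.
by exists (Ordinal lt_ck); rewrite // in_word_ffun nth_x eq_b.
Qed.

Lemma pos_word_ffun : pos P = count positive s.
Proof.
pose G (y : letter) b := ((if y is Some (_, b') then b' == b else false) && b : nat).
rewrite /pos -sum1_card -sum1_count big_mkcond [RHS]big_mkcond /=.
rewrite (eq_bigr (fun x : sgnel n => G (nth None s x.1) x.2)) => [|x _]; last first.
  by rewrite inE in_bigcup_word_ffun.
by rewrite sum_sgnel_nth; apply: eq_bigr => -[[c []]|].
Qed.

Lemma mstat_word_ffun : mstat P = word_exp s.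
Proof.
rewrite /mstat weighted_card_word_ffun pos_word_ffun.
have -> : 2 * \sum_(y <- s) block_height y = word_exp s + count positive s.
  rewrite big_distrr /word_exp -sum1_count [\sum_(_ <- _ | positive _) _]big_mkcond.
  rewrite -big_split /=.
  by apply: eq_bigr => -[[b []]|] _ /=; lia.
by rewrite addnK.
Qed.

End WordFfun.

Lemma ffun_wordK P : is_PSSP P -> word_ffun (ffun_word P) = P.
Proof.
case/existsP=> T /and5P[_ /forallP disj /forallP disj_bar _ _].
apply/ffunP=> i; apply/setP=> -[j b]; rewrite in_word_ffun nth_ffun_word /ffun_letter.
case: pickP => [[i' b'] /= in_i'|/(_ (i, b)) /= -> //].
apply/eqP/idP=> [[/val_inj <- <-] // | in_i].
have eq_b : b' = b.
  apply/eqP; apply: contraTT (forallP (disj_bar i) i') => neq_b.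
  apply/pred0Pn; exists (j, b); rewrite /= in_i inE /=.
  by case: b b' neq_b in_i' {in_i} => -[].
subst b'; case: (eqVneq i' i) => [-> // | neq_i].
have := forallP (disj i') i; rewrite neq_i /= => /pred0P/(_ (j, b)).
by rewrite /= in_i' in_i.
Qed.

Lemma big_Dsub (R : Type) (idx : R) (op : Monoid.com_law idx) (F : blocks -> R) :
  k <= n ->
  \big[op/idx]_(P : blocks | is_Dsub P) F P =
  \big[op/idx]_(s <- words n n | (nblocks s == Some k) && (count_mem None s != 1))
    F (word_ffun s).
Proof.
move=> le_kn; pose C s := (nblocks s == Some k) && (count_mem None s != 1).
have C_word s : s \in words n n -> C s ->
    [/\ size s = n, all (block_lt k) s & is_Dsub (word_ffun s)].
  rewrite mem_words => /andP[/eqP size_s _] /andP[/eqP/nblocksP rg_s count_s].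
  have bnd_s : all (block_lt k) s by case: rg_s.
  by split=> //; apply/Dsub_word_ffun.
rewrite -[RHS]big_filter -(big_map word_ffun xpredT) -[LHS]big_filter.
apply: perm_big; apply: uniq_perm.
- exact/filter_uniq/index_enum_uniq.
- rewrite map_inj_in_uniq ?filter_uniq ?uniq_words // => s1 s2.
  rewrite !mem_filter => /andP[/C_word + s1_in] /andP[/C_word + s2_in].
  move=> /(_ s1_in)[size_1 bnd_1 _] /(_ s2_in)[size_2 bnd_2 _] eq_P.
  by rewrite -(word_ffunK size_1 bnd_1) eq_P word_ffunK.
move=> P; rewrite mem_filter mem_index_enum andbT.
apply/idP/mapP=> [Dsub_P | [s]]; last first.
  by rewrite mem_filter => /andP[C_s /C_word/(_ C_s)[]] _ _ Dsub ->.
have PSSP_P : is_PSSP P by case/andP: Dsub_P.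
have bnd_P := ffun_word_block_lt P.
move: Dsub_P; rewrite -(ffun_wordK PSSP_P) => /Dsub_word_ffun.
case/(_ (size_ffun_word _) bnd_P)=> /nblocksP rg_P count_P.
exists (ffun_word P); last by rewrite ffun_wordK.
rewrite mem_filter /C rg_P eqxx count_P mem_words size_ffun_word eqxx.
by apply: sub_all bnd_P => -[[c b]|] //= /leq_trans; apply.
Qed.

End Encoding.

Local Open Scope ring_scope.

Section QAnalogues.
Variables (R : fieldType) (q : R).

Lemma qint_add a b : qint q (a + b) = qint q a + q ^+ a * qint q b.
Proof.
rewrite /qint big_split_ord /= mulr_sumr; congr (_ + _).
by apply: eq_bigr => i _; rewrite exprD.
Qed.

Lemma qintS m : qint q m.+1 = qint q m + q ^+ m.
Proof. by rewrite /qint big_ord_recr. Qed.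

Lemma qint2 : qint q 2 = 1 + q.
Proof. by rewrite !qintS /qint big_ord0 add0r. Qed.

Lemma sum_qint_odd k : \sum_(b < k) q ^+ (2 * b).+1 * qint q 2 = qint q (2 * k).+1 - 1.
Proof.
elim: k => [|k IH]; first by rewrite big_ord0 qintS /qint big_ord0 add0r subrr.
rewrite big_ord_recr /= IH qint2 mulnS add2n !qintS.
by rewrite [q ^+ (2 * k).+2]exprS; ring.
Qed.

Definition qnorm (k : nat) : R := q ^+ (k * k) * qint q 2 ^+ k.

Lemma qnormS k : qnorm k.+1 = qnorm k * (q ^+ (2 * k).+1 * qint q 2).
Proof.
have sqS : (k.+1 * k.+1 = k * k + (2 * k).+1)%N by lia.
by rewrite /qnorm sqS exprS exprD; ring.
Qed.

Definition qfallB (t : R) (k : nat) : R := \prod_(i < k) (t - qint q (2 * i).+1).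

Section WordSums.
Variable n : nat.
Hypotheses (q_neq0 : q != 0) (q2_neq0 : qint q 2 != 0).

Lemma qnorm_neq0 k : qnorm k != 0.
Proof. by rewrite mulf_neq0 // expf_neq0. Qed.

Definition word_weight (g : nat -> R) (s : seq letter) : R :=
  if nblocks s is Some k then q ^+ word_exp s / qnorm k * g k else 0.

Definition gsum (g : nat -> R) (Q : pred nat) (m : nat) : R :=
  \sum_(s <- words n m | Q (count_mem None s)) word_weight g s.

Definition gstep (g : nat -> R) (k : nat) : R :=
  (qint q (2 * k).+1 - 1) * g k + g k.+1.

Lemma word_weight_rcons_None g s : word_weight g (rcons s None) = word_weight g s.
Proof. by rewrite /word_weight nblocks_rcons word_exp_rcons addn0. Qed.

Lemma word_weight_rcons_block g s k b : nblocks s = Some k ->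
  \sum_(sg <- [:: true; false]) word_weight g (rcons s (Some (b, sg))) =
  if (b < k)%N then q ^+ (2 * b).+1 * qint q 2 * word_weight g s
  else if b == k then word_weight (g \o succn) s else 0.
Proof.
move=> nb_s; rewrite !big_cons big_nil addr0 /word_weight.
rewrite !nblocks_rcons nb_s /= !word_exp_rcons /= addn0 addn1 !exprD qint2.
case: ifP => _; first by rewrite [q ^+ (2 * b).+2]exprS; ring.
have [->|_] := eqVneq b k; last by rewrite addr0.
rewrite /= [q ^+ (2 * k).+2]exprS qnormS qint2; field.
by rewrite qnorm_neq0 -qint2 q2_neq0 expf_neq0.
Qed.

Lemma sum_block_letters g s :
  (forall k, nblocks s = Some k -> k < n)%N ->
  \sum_(b <- iota 0 n) \sum_(sg <- [:: true; false]) word_weight g (rcons s (Some (b, sg))) =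
  word_weight (gstep g) s.
Proof.
case nb_s: (nblocks s) => [k|] lt_kn; last first.
  rewrite {2}/word_weight nb_s big1 // => b _; rewrite big1_seq // => sg _.
  by rewrite /word_weight nblocks_rcons nb_s.
have {}lt_kn := lt_kn k erefl.
under eq_bigr do rewrite (word_weight_rcons_block g _ nb_s).
rewrite -(subn0 n) -/(index_iota 0 n) (big_cat_nat (leq0n k) (ltnW lt_kn)) /=.
rewrite (big_ltn lt_kn) /= ltnn eqxx [X in _ + (_ + X)]big1_seq ?addr0 => [|b]; last first.
  by move=> /andP[_]; rewrite mem_index_iota => /andP[lt_kb _]; rewrite ltnNge ltnW // gtn_eqF.
rewrite big_nat_cond (eq_bigr (fun b => q ^+ (2 * b).+1 * qint q 2 * word_weight g s)).
  by rewrite -big_nat_cond -mulr_suml big_mkord sum_qint_odd /word_weight nb_s /gstep /=; ring.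
by move=> b /andP[/andP[_ ->] _].
Qed.

Lemma gsumS g Q m : (m < n)%N ->
  gsum g Q m.+1 = gsum g (fun c => Q c.+1) m + gsum (gstep g) Q m.
Proof.
move=> lt_mn; rewrite /gsum big_mkcond [X in _ = X + _]big_mkcond.
rewrite [X in _ = _ + X]big_mkcond -big_split.
change (words n m.+1) with [seq rcons s y | s <- words n m, y <- letters n].
rewrite big_allpairs_dep; apply: eq_big_seq => s s_in.
rewrite big_cons count_None_rcons addn1 word_weight_rcons_None; congr (_ + _).
rewrite big_allpairs_dep /=.
under eq_bigr do under eq_bigr do rewrite count_None_rcons addn0.
case: ifP => _; last by rewrite big1 // => b _; rewrite big1.
apply: sum_block_letters => k /nblocks_count_le; move: s_in.
by rewrite mem_words => /andP[/eqP -> _] /(leq_trans (leq_addr _ _))/leq_ltn_trans; apply.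
Qed.

Lemma gsum0 g Q : gsum g Q 0 = if Q 0%N then g 0%N else 0.
Proof.
rewrite /gsum big_cons big_nil addr0 /word_weight /=.
by rewrite /word_exp big_nil /qnorm !expr0 mulr1 invr1 !mul1r.
Qed.

Lemma eq_gsum g h Q m : (forall k, k <= m -> g k = h k)%N -> gsum g Q m = gsum h Q m.
Proof.
move=> eq_gh; rewrite /gsum big_seq_cond [RHS]big_seq_cond.
apply: eq_bigr => s /andP[+ _]; rewrite mem_words /word_weight => /andP[/eqP size_s _].
case nb_s: (nblocks s) => [k|] //.
by rewrite eq_gh // -size_s (leq_trans _ (nblocks_count_le nb_s)) ?leq_addr.
Qed.

Lemma gsumZ c g Q m : gsum (fun k => c * g k) Q m = c * gsum g Q m.
Proof.
rewrite /gsum mulr_sumr; apply: eq_bigr => s _; rewrite /word_weight.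
by case: (nblocks s) => [k|]; rewrite ?mulr0 // mulrCA.
Qed.

Lemma eq_gsum_pred g (Q Q' : pred nat) m : Q =1 Q' -> gsum g Q m = gsum g Q' m.
Proof. by move=> eq_Q; apply: eq_bigl => s; rewrite eq_Q. Qed.

Lemma gsum_pred0 g m : gsum g pred0 m = 0.
Proof. by rewrite /gsum big_pred0. Qed.

Lemma gsum_split_count1 g m : gsum g predT m = gsum g (pred1 1%N) m + gsum g (predC1 1%N) m.
Proof. by rewrite /gsum (bigID (fun s => count_mem None s == 1%N)). Qed.

Definition gcoef (Q : pred nat) (m k : nat) : R := (qnorm k)^-1 *
  \sum_(s <- words n m | (nblocks s == Some k) && Q (count_mem None s)) q ^+ word_exp s.

Lemma gsum_gcoef g Q m : gsum g Q m = \sum_(k < m.+1) gcoef Q m k * g k.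
Proof.
rewrite /gsum /gcoef.
under [RHS]eq_bigr do rewrite mulr_sumr mulr_suml big_mkcond.
rewrite exchange_big big_mkcond /=; apply: eq_big_seq => s /[!mem_words] /andP[/eqP size_s _].
rewrite /word_weight; case nb_s: (nblocks s) => [k|]; last first.
  by rewrite if_same big1 // => i _; rewrite andFb.
have lt_km : (k < m.+1)%N.
  by rewrite ltnS -size_s (leq_trans _ (nblocks_count_le nb_s)) ?leq_addr.
rewrite (bigD1 (Ordinal lt_km)) //= eqxx big1 ?addr0 => [|i]; last first.
  by rewrite -val_eqE /= (inj_eq Some_inj) eq_sym => /negbTE ->.
by case: (Q _) => //=; rewrite [_ / _]mulrC.
Qed.

Lemma gstep_qfallB t k : gstep (qfallB t) k = (t - 1) * qfallB t k.
Proof. by rewrite /gstep /qfallB big_ord_recr /=; ring. Qed.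

Lemma gsum_gstep_qfallB t Q m : gsum (gstep (qfallB t)) Q m = (t - 1) * gsum (qfallB t) Q m.
Proof. by rewrite -gsumZ; apply: eq_gsum => k _; apply: gstep_qfallB. Qed.

Lemma gsum_qfallB t m : (m <= n)%N -> gsum (qfallB t) predT m = t ^+ m.
Proof.
elim: m => [|m IH] le_mn; first by rewrite gsum0 /qfallB big_ord0.
rewrite gsumS // gsum_gstep_qfallB (@eq_gsum_pred _ _ predT) // IH 1?ltnW //.
by rewrite exprS; ring.
Qed.

Lemma gsum_qfallB_count0 t m : (m <= n)%N -> gsum (qfallB t) (pred1 0%N) m = (t - 1) ^+ m.
Proof.
elim: m => [|m IH] le_mn; first by rewrite gsum0 /qfallB big_ord0.
rewrite gsumS // gsum_gstep_qfallB (@eq_gsum_pred _ _ pred0) // gsum_pred0.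
by rewrite IH 1?ltnW // add0r exprS.
Qed.

Lemma gsum_qfallB_count1 t m :
  (m <= n)%N -> gsum (qfallB t) (pred1 1%N) m = m%:R * (t - 1) ^+ m.-1.
Proof.
elim: m => [|m IH] le_mn; first by rewrite gsum0 mul0r.
rewrite gsumS // gsum_gstep_qfallB (@eq_gsum_pred _ _ (pred1 0%N)) //.
rewrite gsum_qfallB_count0 1?ltnW // IH 1?ltnW //.
case: m {IH le_mn} => [|m] /=; first by rewrite mul0r mulr0 addr0 mul1r.
by rewrite exprS -[m.+2]addn1 natrD -[m.+1]addn1 natrD; ring.
Qed.

Lemma gsum_diag m : (m <= n)%N -> gsum (fun k => (k == m)%:R) predT m = 1.
Proof.
elim: m => [|m IH] le_mn; first by rewrite gsum0.
rewrite gsumS // (@eq_gsum _ (fun k => 0 * (k == m)%:R)) => [|k le_km]; last first.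
  by rewrite mul0r ltn_eqF.
rewrite gsumZ mul0r add0r -[RHS](IH (ltnW le_mn)); apply: eq_gsum => k le_km.
by rewrite /gstep ltn_eqF ?ltnS // mulr0 add0r eqSS.
Qed.

End WordSums.

End QAnalogues.

Lemma SD_gcoef (R : fieldType) (q : R) n k :
  (k <= n)%N -> SD n k q = gcoef q n (predC1 1%N) n k.
Proof.
move=> le_kn; rewrite /SD /gcoef -/(qnorm q k) (big_Dsub _ _ le_kn); congr (_ * _).
rewrite big_seq_cond [RHS]big_seq_cond; apply: eq_bigr => s.
case/and3P=> /[!mem_words] /andP[/eqP size_s _] /eqP/nblocksP[bnd_s _ _] _.
by rewrite mstat_word_ffun.
Qed.

Section Coefficients.
Variables (R : fieldType) (q : R) (n : nat).
Hypotheses (q_neq0 : q != 0) (q2_neq0 : qint q 2 != 0).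

Lemma sum_SD_qfallB t :
  \sum_(k < n.+1) SD n k q * qfallB q t k = t ^+ n - n%:R * (t - 1) ^+ n.-1.
Proof.
under eq_bigr => k _ do rewrite SD_gcoef -1?ltnS //.
rewrite -gsum_gcoef -(gsum_qfallB q_neq0 q2_neq0 t (leqnn n)).
by rewrite -(gsum_qfallB_count1 q_neq0 q2_neq0 t (leqnn n)) gsum_split_count1; ring.
Qed.

Lemma SD_diag : SD n n q = 1.
Proof.
have := gsum_diag q_neq0 q2_neq0 (leqnn n).
rewrite gsum_gcoef big_ord_recr /= eqxx mulr1 big1 ?add0r => [<-|k _]; last first.
  by rewrite ltn_eqF // mulr0.
rewrite SD_gcoef // /gcoef; congr (_ * _).
rewrite big_seq_cond [RHS]big_seq_cond; apply: eq_bigl => s.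
case: (boolP (s \in words n n)) => //= /[!mem_words] /andP[/eqP size_s _].
case: eqP => //= /nblocks_count_le; rewrite size_s -{2}[n]addn0 leq_add2l leqn0.
by move=> /eqP ->.
Qed.

End Coefficients.

Lemma fallD_lt (R : fieldType) n k (q t : R) : (k < n)%N -> fallD n k q t = qfallB q t k.
Proof.
by move=> lt_kn; rewrite /fallD lt_kn; case: eqP => // ->; rewrite /qfallB big_ord0.
Qed.

Lemma fallD_pred (R : fieldType) n (q t : R) : fallD n n.-1 q t = qfallB q t n.-1.
Proof. by case: n => [|n]; [rewrite /fallD /qfallB big_ord0 | apply: fallD_lt]. Qed.

Lemma fallD_diag (R : fieldType) n (q t : R) :
  fallD n n q t = qfallB q t n + qint q n * q ^+ n.-1 * qfallB q t n.-1.
Proof.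
case: n => [|n]; first by rewrite /fallD /qfallB /qint !big_ord0 !mul0r addr0.
rewrite /fallD /= ltnn /qfallB big_ord_recr /=.
have -> : qint q (2 * n).+1 = qint q n + q ^+ n * qint q n.+1.
  by rewrite -qint_add; congr qint; lia.
ring.
Qed.

Theorem proposition3p4 (R : numClosedFieldType) (q t : R) (n : nat) :
  q != 0 -> qint q 2 != 0 ->
  t ^+ n =
    \sum_(k < n.+1) SD n k q * fallD n k q t
    + n%:R * (t - 1) ^+ n.-1
    - qint q n * q ^+ n.-1 * fallD n n.-1 q t.
Proof.
move=> q_neq0 q2_neq0.
have := sum_SD_qfallB n q_neq0 q2_neq0 t.
rewrite !big_ord_recr /= SD_diag // !mul1r fallD_diag fallD_pred => sum_SD.
under eq_bigr => k _ do rewrite fallD_lt //.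
by rewrite addrA sum_SD; ring.
Qed.
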